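(* Let $\mathbb{F}_q$ be any finite field and let $S\subseteq \mathbb{F}_q\setminus\{0\}$ be any symmetric set (i.e. $S=-S$). Then \[\Theta_{\mathrm{lin}}\big(\Gamma(\mathbb{F}_q,S)\big)\le q^{\,1-\frac{|S|}{q-1}}.\] Equivalently, for every $n\ge 1$, every linear subspace of $\mathbb{F}_q^n$ that is an independent set in $\Gamma(\mathbb{F}_q,S)^n$ has dimension $m$ satisfying $\frac{m}{n}\le 1-\frac{|S|}{q-1}$.
   Context: For graphs $G_1,\dots,G_k$, the strong product $G_1\boxtimes\cdots\boxtimes G_k$ has vertex set $V(G_1)\times\cdots\times V(G_k)$, and two distinct vertices $(v_1,\dots,v_k)$ and $(u_1,\dots,u_k)$ are adjacent iff for every $i$, either $v_i=u_i$ or $\{v_i,u_i\}\in E(G_i)$. Write $G^k$ for the strong product of $k$ copies of $G$. For a symmetric set $S\subseteq\mathbb{F}_q\setminus\{0\}$ (with $S=-S$; $S$ need not generate $\mathbb{F}_q$), the Cayley graph $\Gamma(\mathbb{F}_q,S)$ has vertex set $\mathbb{F}_q$, and $u,v$ are adjacent iff $u-v\in S$. For a graph $G$ with $V(G)=\mathbb{F}_q$ and $k\ge1$, the linear independence number $\alpha_{\mathrm{lin}}(G^k)$ is the largest size of an independent set of $G^k$ that is a linear subspace of $\mathbb{F}_q^k$ (equivalently, one of the form $\{(x,Ax):x\in\mathbb{F}_q^m\}$ for some $1\le m\le k$ and some $A\in\mathbb{F}_q^{(k-m)\times m}$, up to the order of coordinates). The linear Shannon capacity is $\Theta_{\mathrm{lin}}(G)=\sup_k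 \alpha_{\mathrm{lin}}(G^k)^{1/k}=\lim_{k\to\infty}\alpha_{\mathrm{lin}}(G^k)^{1/k}$. *)

From HB Require Import structures.
From mathcomp Require Import all_boot all_order all_algebra all_field.
From mathcomp Require Import all_classical all_reals all_analysis.
Set Implicit Arguments. Unset Strict Implicit. Unset Printing Implicit Defensive.
Import Order.TTheory GRing.Theory Num.Theory.
Local Open Scope ring_scope.

Section Defs.
Variable F : finFieldType.

(* Adjacency in the strong power Gamma(F_q,S)^k : vertices are vectors of F^k
   (row vectors 'rV[F]_k); distinct u, v are adjacent iff in every coordinate
   they are equal or their difference lies in S (Cayley graph adjacency). *)
Definition strong_cayley_adj (S : {set F}) (k : nat) (u v : 'rV[F]_k) : bool :=
  (u != v) && [forall i : 'I_k, (u ord0 i == v ord0 i) || (u ord0 i - v ord0 i \in S)].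

Definition independent_set (S : {set F}) (k : nat) (A : {set 'rV[F]_k}) : bool :=
  [forall u in A, forall v in A, ~~ strong_cayley_adj S u v].

Definition is_subspace (k : nat) (A : {set 'rV[F]_k}) : bool :=
  (0 \in A) && [forall a : F, forall x in A, forall y in A, a *: x + y \in A].

Definition alpha_lin (S : {set F}) (k : nat) : nat :=
  \max_(A : {set 'rV[F]_k} | is_subspace A && independent_set S A) #|A|.

Definition Theta_lin (R : realType) (S : {set F}) : R :=
  sup [set ((alpha_lin S k)%:R `^ (k%:R)^-1 : R) | k in [set k : nat | (0 < k)%N]].

End Defs.

From HB Require Import structures.
From mathcomp Require Import all_boot all_order all_algebra all_field.
From mathcomp Require Import all_classical all_reals all_analysis.
From mathcomp Require Import ring.
Import Order.TTheory GRing.Theory Num.Theory.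
Local Open Scope ring_scope.
Set Implicit Arguments. Unset Strict Implicit. Unset Printing Implicit Defensive.

(* Linear Shannon capacity of Cayley graphs on F_q, by a Chevalley-Warning
   argument.  Let A be a linear subspace of F_q^n of dimension d that is
   independent in Gamma(F_q,S)^n, and let T = F_q \ ({0} u S).  Since 0 is in A,
   every nonzero x in A has a coordinate in T. *)

Section PowerSums.
Variable F : finFieldType.

(* q = 0 in F: translating by 1 permutes F, so sum_t (t + 1) = sum_t t,
   which says q * 1 = 0. *)
Lemma card_natr0 : (#|F|%:R : F) = 0.
Proof.
have : \sum_(t : F) (t + 1) = \sum_(t : F) t.
  by rewrite [RHS](reindex_inj (addIr (1 : F))).
by rewrite big_split sumr_const /= -[RHS]addr0 => /addrI.
Qed.

(* For 0 < e < q-1 not every nonzero element is an e-th root of unity, since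
   'X^e - 1 has at most e roots. *)
Lemma exists_pow_ne1 e : (0 < e)%N -> (e < #|F|.-1)%N ->
  exists2 a : F, a != 0 & a ^+ e != 1.
Proof.
move=> e_gt0 e_small; apply/exists_inP; apply: contraTT e_small.
rewrite negb_exists_in => /forall_inP roots; rewrite -leqNgt.
have -> : #|F|.-1 = size (enum [pred a : F | a != 0]) by rewrite -cardE cardC1.
apply: max_unity_roots e_gt0 _ (enum_uniq _).
by apply/allP => a; rewrite mem_enum => /roots /negPn; rewrite unity_rootE.
Qed.

Lemma sum_expr_eq0 e : (e < #|F|.-1)%N -> \sum_(t : F) t ^+ e = 0.
Proof.
case: e => [_ | e e_small].
  by under eq_bigr do rewrite expr0; rewrite sumr_const card_natr0.
have [a a_neq0 ae_neq1] := exists_pow_ne1 (ltn0Sn e) e_small.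
have : \sum_(t : F) (a * t) ^+ e.+1 = \sum_(t : F) t ^+ e.+1.
  by rewrite [RHS](reindex_inj (mulfI a_neq0)).
under eq_bigr do rewrite exprMn.
rewrite -mulr_sumr => /eqP; rewrite -subr_eq0 -{2}[\sum__ _]mul1r -mulrBl.
by rewrite mulf_eq0 subr_eq0 (negbTE ae_neq1) => /eqP.
Qed.

End PowerSums.

Section PolynomialFunctions.
Variables (F : finFieldType) (m : nat).
Local Notation V := {ffun 'I_m -> F}.

Definition monomial (e : 'I_m -> nat) (v : V) : F := \prod_j v j ^+ e j.

Definition polyfun (d : nat) (f : V -> F) : Prop :=
  exists s : seq (F * ('I_m -> nat)),
    all (fun p => \sum_j p.2 j <= d)%N s /\
    forall v, f v = \sum_(p <- s) p.1 * monomial p.2 v.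

Lemma polyfun_ext d f g : f =1 g -> polyfun d f -> polyfun d g.
Proof. by move=> fg [s [s_deg f_sum]]; exists s; split=> // v; rewrite -fg. Qed.

Lemma polyfun_const d c : polyfun d (fun _ => c).
Proof.
exists [:: (c, fun _ => 0%N)]; split; first by rewrite /= big1.
move=> v; rewrite big_seq1 /monomial /=.
by rewrite big1 ?mulr1 // => j _; rewrite expr0.
Qed.

Lemma polyfun_var j : polyfun 1 (fun v => v j).
Proof.
exists [:: (1, fun k => nat_of_bool (k == j))]; split.
  by rewrite /= andbT (bigD1 j) //= eqxx big1 // => k /negbTE ->.
move=> v; rewrite big_seq1 /monomial /= mul1r (bigD1 j) //= eqxx expr1.
by rewrite big1 ?mulr1 // => k /negbTE ->; rewrite expr0.
Qed.

Lemma polyfun_add d f g : polyfun d f -> polyfun d g ->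
  polyfun d (fun v => f v + g v).
Proof.
move=> [s [s_deg f_sum]] [t [t_deg g_sum]]; exists (s ++ t); split.
  by rewrite all_cat s_deg t_deg.
by move=> v; rewrite big_cat /= f_sum g_sum.
Qed.

Lemma polyfun_mul d1 d2 f g : polyfun d1 f -> polyfun d2 g ->
  polyfun (d1 + d2) (fun v => f v * g v).
Proof.
move=> [s [s_deg f_sum]] [t [t_deg g_sum]].
exists [seq (p.1 * p'.1, fun j => (p.2 j + p'.2 j)%N) | p <- s, p' <- t]; split.
  apply/allP => x /allpairsP [[p p'] /= [ps p't ->]] /=.
  by rewrite big_split /= leq_add //; [apply: (allP s_deg) | apply: (allP t_deg)].
move=> v; rewrite f_sum g_sum big_allpairs_dep mulr_suml; apply: eq_bigr => p _.
rewrite mulr_sumr; apply: eq_bigr => p' _ /=.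
rewrite /monomial -!mulrA; congr (_ * _); rewrite mulrCA; congr (_ * _).
by rewrite -big_split /=; apply: eq_bigr => j _; rewrite exprD.
Qed.

Lemma polyfun_sum (I : Type) (r : seq I) d (f : I -> V -> F) :
  (forall i, polyfun d (f i)) -> polyfun d (fun v => \sum_(i <- r) f i v).
Proof.
move=> f_deg; elim: r => [|i r IHr].
  by apply: (polyfun_ext _ (polyfun_const d 0)) => v; rewrite big_nil.
by apply: (polyfun_ext _ (polyfun_add (f_deg i) IHr)) => v; rewrite big_cons.
Qed.

Lemma polyfun_prod (I : Type) (r : seq I) d (f : I -> V -> F) :
  (forall i, polyfun d (f i)) ->
  polyfun (size r * d) (fun v => \prod_(i <- r) f i v).
Proof.
move=> f_deg; elim: r => [|i r IHr].
  by apply: (polyfun_ext _ (polyfun_const 0 1)) => v; rewrite big_nil.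
by apply: (polyfun_ext _ (polyfun_mul (f_deg i) IHr)) => v; rewrite big_cons.
Qed.

(* The key counting fact of Chevalley-Warning: a polynomial function of degree
   < m(q-1) sums to 0 over F^m, since each monomial of such degree has some
   exponent < q-1 and its sum factors into one-variable power sums. *)
Lemma sum_polyfun_eq0 d f : polyfun d f -> (d < m * #|F|.-1)%N ->
  \sum_(v : V) f v = 0.
Proof.
move=> [s [s_deg f_sum]] d_small.
under eq_bigr do rewrite f_sum.
rewrite exchange_big big1_seq // => p /andP[_ ps] /=.
rewrite -mulr_sumr; apply/eqP; rewrite mulf_eq0; apply/orP; right; apply/eqP.
have -> : \sum_(v : V) monomial p.2 v = \prod_(j : 'I_m) \sum_(t : F) t ^+ p.2 j.
  by rewrite bigA_distr_bigA.
have [j small_j] : exists j, (p.2 j < #|F|.-1)%N.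
  apply/existsP; apply: contraLR (allP s_deg p ps).
  rewrite negb_exists -ltnNge => /forallP all_large; apply: leq_trans d_small _.
  rewrite -[X in (X * _)%N]card_ord -sum_nat_const; apply: leq_sum => j _.
  by rewrite leqNgt all_large.
by rewrite (bigD1 j) //= sum_expr_eq0 // mul0r.
Qed.

End PolynomialFunctions.

Section CoveringBound.
Variables (F : finFieldType) (n d : nat) (T : {set F}) (c : 'I_n -> 'I_d -> F).

Definition linform (i : 'I_n) (y : {ffun 'I_d -> F}) : F := \sum_j y j * c i j.

Definition hitting_poly (y : {ffun 'I_d -> F}) : F :=
  \prod_(i <- enum 'I_n) \prod_(t <- enum T) (linform i y - t).

Lemma hitting_poly_deg : polyfun (n * (#|T| * 1)) hitting_poly.
Proof.
rewrite -{1}[n]card_ord cardE cardE.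
apply: polyfun_prod => i; apply: polyfun_prod => t.
have linform_deg : polyfun 1 (linform i).
  apply: polyfun_sum => j; rewrite -[1%N]addn0.
  exact: polyfun_mul (polyfun_var F j) (polyfun_const _ _ _).
exact: polyfun_add linform_deg (polyfun_const _ _ _).
Qed.

Hypothesis T0 : 0 \notin T.

Lemma hitting_poly0 : hitting_poly 0 != 0.
Proof.
rewrite prodf_seq_neq0; apply/allP => i _ /=.
rewrite prodf_seq_neq0; apply/allP => t; rewrite mem_enum => tT /=.
rewrite /linform big1 ?sub0r ?oppr_eq0 => [|j _]; last by rewrite ffunE mul0r.
by apply: contraNneq T0 => <-.
Qed.

Hypothesis hit : forall y : {ffun 'I_d -> F}, y != 0 ->
  exists i, linform i y \in T.

Lemma hitting_poly_nz y : y != 0 -> hitting_poly y = 0.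
Proof.
move=> /hit [i yiT]; rewrite /hitting_poly (big_rem i) ?mem_enum //=.
by rewrite (big_rem (linform i y)) ?mem_enum //= subrr !mul0r.
Qed.

(* Otherwise
   hitting_poly would sum to 0 over F^d, whereas its sum is its value at 0. *)
Lemma covering_dim_bound : (d * #|F|.-1 <= n * #|T|)%N.
Proof.
rewrite leqNgt; apply/negP => too_small.
have := sum_polyfun_eq0 hitting_poly_deg; rewrite muln1 => /(_ too_small) /eqP.
rewrite (bigD1 (0 : {ffun 'I_d -> F})) //= big1 ?addr0 ?(negbTE hitting_poly0) // => y.
exact: hitting_poly_nz.
Qed.

End CoveringBound.

(* The differences that are not edges of Gamma(F,S): F \ ({0} u S). *)
Definition non_edges (F : finFieldType) (S : {set F}) : {set F} := ~: (0 |: S).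

Lemma card_non_edges (F : finFieldType) (S : {set F}) : 0 \notin S ->
  (#|non_edges S| + #|S|)%N = #|F|.-1.
Proof.
move=> S0; have := cardsC (0 |: S); rewrite cardsU1 S0 /non_edges => <-.
by rewrite add1n addnC.
Qed.

Section IndependentSubspace.
Variables (F : finFieldType) (n : nat) (S : {set F}) (A : {set 'rV[F]_n}).
Hypotheses (A_sub : is_subspace A) (A_ind : independent_set S A).

Lemma subspace0 : 0 \in A. Proof. by case/andP: A_sub. Qed.

Lemma subspace_lin a x y : x \in A -> y \in A -> a *: x + y \in A.
Proof.
case/andP: A_sub => _ /forallP /(_ a) /forall_inP A_lin xA yA.
by have /forall_inP := A_lin x xA; apply.
Qed.

Lemma subspace_sum (I : Type) (r : seq I) (a : I -> F) (x : I -> 'rV[F]_n) :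
  (forall i, x i \in A) -> \sum_(i <- r) a i *: x i \in A.
Proof.
move=> xA; elim: r => [|i r IHr]; first by rewrite big_nil subspace0.
by rewrite big_cons subspace_lin.
Qed.

Lemma span_subspace v : v \in <<enum A>>%VS -> v \in A.
Proof.
move=> /(@coord_span _ _ _ (in_tuple (enum A))) ->.
by apply: subspace_sum => i; rewrite -mem_enum mem_nth.
Qed.

(* Since 0 is in A and A is independent, no nonzero x in A is adjacent to 0:
   some coordinate of x is neither 0 nor in S. *)
Lemma independent_coord x : x \in A -> x != 0 ->
  exists i, x 0 i \in non_edges S.
Proof.
move=> xA x_neq0; move/forall_inP: A_ind => /(_ x xA) /forall_inP.
move=> /(_ 0 subspace0); rewrite /strong_cayley_adj x_neq0 /= negb_forall.
case/existsP => i; rewrite mxE subr0 => x_i; exists i.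
by rewrite /non_edges !inE.
Qed.

(* An independent subspace of dimension d has q^d elements and, by the
   covering bound applied to a basis, satisfies d(q-1) <= n|non_edges S|. *)
Lemma independent_subspace_dim : exists d : nat,
  (#|A| <= #|F| ^ d)%N /\ (d * #|F|.-1 <= n * #|non_edges S|)%N.
Proof.
set U := <<enum A>>%VS; set b := vbasis U.
exists (\dim U); split.
  rewrite -card_vspace; apply: subset_leq_card; apply/fintype.subsetP => x xA.
  by apply: memv_span; rewrite mem_enum.
apply: (covering_dim_bound (c := fun i j => b`_j 0 i)).
  by rewrite /non_edges !inE eqxx.
move=> y y_neq0.
have bA (j : 'I_(\dim U)) : b`_j \in A.
  by apply/span_subspace/vbasis_mem/mem_nth; rewrite size_tuple.
set x := \sum_j y j *: b`_j.
have x_neq0 : x != 0.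
  apply: contra y_neq0 => /eqP x0; apply/eqP/ffunP => j; rewrite ffunE.
  by have /freeP b_free := basis_free (vbasisP U); apply: (b_free (fun j => y j) x0).
have [i x_i] := independent_coord (subspace_sum _ _ bA) x_neq0; exists i.
suff -> : linform (fun i j => b`_j 0 i) i y = x 0 i by [].
by rewrite summxE; apply: eq_bigr => j _; rewrite mxE.
Qed.

End IndependentSubspace.

Section CapacityBound.
Variables (R : realType) (F : finFieldType) (S : {set F}).
Hypothesis S0 : 0 \notin S.

Let rate : R := 1 - #|S|%:R / (#|F|%:R - 1).

Lemma dim_le_rate k d : (d * #|F|.-1 <= k * #|non_edges S|)%N ->
  (d%:R : R) <= k%:R * rate.
Proof.
have q_pred : (#|F|%:R : R) - 1 = #|F|.-1%:R.
  by rewrite -[in LHS](prednK (ltnW (finNzRing_gt1 F))) -natr1 addrK.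
have card_T : (#|non_edges S|%:R : R) = #|F|.-1%:R - #|S|%:R.
  by rewrite -(card_non_edges S0) natrD addrK.
have q_pos : (0 : R) < #|F|.-1%:R by rewrite ltr0n ltn_predRL finNzRing_gt1.
rewrite -(ler_nat R) !natrM card_T -ler_pdivlMr //.
suff -> : rate = (#|F|.-1%:R - #|S|%:R) / #|F|.-1%:R by rewrite mulrA.
by rewrite /rate q_pred; field; rewrite lt0r_neq0.
Qed.

Lemma independent_subspace_card k (A : {set 'rV[F]_k}) :
  is_subspace A -> independent_set S A -> (#|A|%:R : R) <= #|F|%:R `^ (k%:R * rate).
Proof.
move=> A_sub A_ind; have [d [A_card d_bound]] := independent_subspace_dim A_sub A_ind.
apply: (@le_trans _ _ (#|F| ^ d)%N%:R); first by rewrite ler_nat.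
rewrite natrX -powR_mulrn ?ler0n //; apply: ler_powR; last exact: dim_le_rate.
by rewrite ler1n ltnW // finNzRing_gt1.
Qed.

Lemma alpha_lin_le k : ((alpha_lin S k)%:R : R) <= #|F|%:R `^ (k%:R * rate).
Proof.
rewrite /alpha_lin; apply: (big_ind (fun x : nat => (x%:R : R) <= _)).
- exact: powR_ge0.
- by move=> x y x_le y_le; rewrite /maxn; case: ifP.
- by move=> A /andP[A_sub A_ind]; apply: independent_subspace_card.
Qed.

End CapacityBound.

Theorem theorem1 (R : realType) (F : finFieldType) (S : {set F})
  (hS0 : 0 \notin S) (hSsym : forall x : F, x \in S -> - x \in S) :
  Theta_lin R S <=
    (#|F|%:R : R) `^ (1 - #|S|%:R / (#|F|%:R - 1)).
Proof.
rewrite /Theta_lin; apply: ge_sup.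
  by exists ((alpha_lin S 1)%:R `^ (1%:R)^-1); exists 1%N.
move=> _ [k /= k_gt0 <-]; set rate := 1 - _.
have -> : (#|F|%:R : R) `^ rate = (#|F|%:R `^ (k%:R * rate)) `^ (k%:R)^-1.
  by rewrite -powRrM mulrAC mulfV ?mul1r // pnatr_eq0 -lt0n.
apply: ge0_ler_powR.
- by rewrite invr_ge0 ler0n.
- by rewrite nnegrE ler0n.
- by rewrite nnegrE powR_ge0.
- exact: alpha_lin_le.
Qed.
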